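(* Let $h,n\geq2$ and let $U\leq G$ be regular. Then: (i) $O(U)$ is regular; (ii) $\mathcal{F}^U=\mathcal{F}^{O(U)}$; (iii) $\bigcap_{F\in\mathcal{F}^U}G(F)=O(U)$.
   Context: Permutations compose as $(\sigma\tau)(x)=\sigma(\tau(x))$. Let $G=S_h\times S_n$ and $\mathcal{P}=(S_n)^h$ (preference profiles), with $G$ acting by $(p^{(\varphi,\psi)})_i=\psi\,p_{\varphi^{-1}(i)}$; for $U\leq G$, $p^U=\{p^g:g\in U\}$. $U\leq G$ is regular if for every $p\in\mathcal{P}$, $\{g\in U:p^g=p\}\subseteq S_h\times\{id\}$. A social preference function is any $F:\mathcal{P}\to S_n$; $\mathcal{F}^U$ is the set of $U$-symmetric ones ($F(p^{(\varphi,\psi)})=\psi F(p)$ for all $p$ and $(\varphi,\psi)\in U$), and $G(F)=\{(\varphi,\psi)\in G: F(p^{(\varphi,\psi)})=\psi F(p)\ \forall p\}$. For regular $U$, let $\mathcal{A}(U)$ be the set of regular subgroups $V\leq G$ with $V\geq U$ and $p^V\subseteq p^U$ for all $p\in\mathcal{P}$, and let the orbit extension $O(U)=\langle\mathcal{A}(U)\rangle$ be the subgroup generated by them. *)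

From mathcomp Require Import all_boot all_fingroup.
Set Implicit Arguments. Unset Strict Implicit. Unset Printing Implicit Defensive.
Local Open Scope group_scope.

(* G = S_h x S_n, as the external direct product finGroupType (componentwise). *)
Definition Gt (h n : nat) := ({perm 'I_h} * {perm 'I_n})%type.
Definition Prof (h n : nat) := {ffun 'I_h -> {perm 'I_n}}.
Definition SPF (h n : nat) := {ffun Prof h n -> {perm 'I_n}}.

(* NB: mathcomp's (s * t) x = t (s x), i.e. s * t is the composition t o s. *)
Definition pact h n (p : Prof h n) (g : Gt h n) : Prof h n :=
  [ffun i => p ((g.1)^-1 i) * g.2].

Definition porbit_by h n (U : {set Gt h n}) (p : Prof h n) : {set Prof h n} :=
  [set pact p g | g in U].

Definition regular h n (U : {set Gt h n}) : bool :=
  [forall p : Prof h n, [set g in U | pact p g == p] \subset [set g : Gt h n | g.2 == 1]].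

Definition symmetric h n (U : {set Gt h n}) (F : SPF h n) : bool :=
  [forall p : Prof h n, forall g in U, F (pact p g) == F p * g.2].

Definition FU h n (U : {set Gt h n}) : {set SPF h n} := [set F | symmetric U F].

Definition GF h n (F : SPF h n) : {set Gt h n} :=
  [set g : Gt h n | [forall p : Prof h n, F (pact p g) == F p * g.2]].

Definition inA h n (U V : {set Gt h n}) : bool :=
  [&& regular V, U \subset V & [forall p : Prof h n, porbit_by V p \subset porbit_by U p]].

Definition Oext h n (U : {set Gt h n}) : {set Gt h n} :=
  << \bigcup_(V : {group Gt h n} | inA U V) V >>.

(* Let W be the intersection of the groups G(F) over all U-symmetric F.  Each V in A(U)
   lies in W: on a profile p an element g of V acts like some u of U, and regularity of V
   forces g.2 = u.2, so F(p^g) = F(p^u) = F(p) g.2.  Conversely W belongs to A(U).  Choosing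
   a representative in every U-orbit, regularity of U makes F(r^u) := u.2 a well-defined
   U-symmetric function; multiplying it by an arbitrary U-invariant function shows that every
   element of W preserves all U-invariant functions, hence all U-orbits (n >= 2 provides a
   non-identity permutation to separate one orbit from the rest), and evaluating it at a
   fixed profile shows that W is regular.  Hence O(U) = W, which gives (i) and (iii), and (ii)
   follows because F is V-symmetric exactly when V is contained in G(F). *)

From mathcomp Require Import all_boot all_fingroup.
Set Implicit Arguments. Unset Strict Implicit. Unset Printing Implicit Defensive.
Local Open Scope group_scope.

Lemma exists_perm_neq1 (n : nat) : (2 <= n)%N -> exists t : {perm 'I_n}, t != 1.
Proof.
move=> n_ge2; have n_gt0 : (0 < n)%N by apply: leq_trans n_ge2.
exists (tperm (Ordinal n_gt0) (Ordinal n_ge2)); apply/eqP => /permP/(_ (Ordinal n_gt0)).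
by rewrite tpermL perm1 => /(congr1 val).
Qed.

Section Profiles.
Variables h n : nat.
Implicit Types (p q : Prof h n) (g u : Gt h n) (U V : {group Gt h n}) (F : SPF h n).

Lemma pact1 p : pact p 1 = p.
Proof. by apply/ffunP => i; rewrite ffunE invg1 perm1 mulg1. Qed.

Lemma pactM p g u : pact p (g * u) = pact (pact p g) u.
Proof. by apply/ffunP => i; rewrite !ffunE invMg permM mulgA. Qed.

Definition prof_action := TotalAction pact1 pactM.

Lemma porbit_byE (A : {set Gt h n}) p : porbit_by A p = orbit prof_action A p.
Proof. by []. Qed.

Lemma regularP (A : {set Gt h n}) :
  reflect (forall p g, g \in A -> pact p g = p -> g.2 = 1) (regular A).
Proof.
apply: (iffP forallP) => [regA p g Ag pg | fix1 p].
  by have /subsetP/(_ g) := regA p; rewrite !inE Ag pg eqxx => /(_ isT)/eqP.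
by apply/subsetP => g; rewrite !inE => /andP[Ag /eqP/(fix1 p g Ag) ->].
Qed.

Lemma regular_pact_inj V p g u : regular V -> g \in V -> u \in V ->
  pact p g = pact p u -> g.2 = u.2.
Proof.
move=> /regularP regV Vg Vu pgu; apply/eqP; rewrite eq_mulgV1.
have -> : g.2 * u.2^-1 = (g * u^-1).2 by [].
apply/eqP/(regV p); first by rewrite groupM ?groupV.
by rewrite pactM pgu -pactM mulgV pact1.
Qed.

Lemma GF_group F : group_set (GF F).
Proof.
apply/group_setP; split=> [|g u]; rewrite !inE.
  by apply/forallP => p; rewrite pact1 mulg1.
move=> /forallP Fg /forallP Fu; apply/forallP => p.
by rewrite pactM (eqP (Fu _)) (eqP (Fg _)) mulgA.
Qed.

Canonical GF_group_of F := Group (GF_group F).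

Lemma mem_FU (A : {set Gt h n}) F : (F \in FU A) = (A \subset GF F).
Proof.
rewrite inE; apply/forallP/subsetP => [symF g Ag | sAG p].
  by rewrite inE; apply/forallP => p; apply: (forall_inP (symF p)).
by apply/forall_inP => g /sAG; rewrite inE => /forallP.
Qed.

Lemma inA_sub_GF U V F : inA U V -> F \in FU U -> V \subset GF F.
Proof.
case/and3P => regV sUV /forallP sVU; rewrite mem_FU => sUG.
apply/subsetP => g Vg; rewrite inE; apply/forallP => p.
have : pact p g \in porbit_by U p by exact: (subsetP (sVU p)) (mem_orbit prof_action p Vg).
rewrite porbit_byE => /orbitP[u Uu /= pgu].
have /subsetP/(_ u Uu) := sUG; rewrite inE => /forallP/(_ p).
by rewrite /= pgu (regular_pact_inj regV Vg (subsetP sUV u Uu) (esym pgu)).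
Qed.

Lemma Oext_sub_GF U F : F \in FU U -> Oext U \subset GF F.
Proof. by move=> FF; rewrite gen_subG; apply/bigcupsP => V /inA_sub_GF; apply. Qed.

Lemma porbit_by_pact U q u : u \in U -> porbit_by U (pact q u) = porbit_by U q.
Proof. exact: (orbit_act prof_action). Qed.

Lemma porbit_by_refl U p : p \in porbit_by U p.
Proof. exact: (orbit_refl prof_action). Qed.

Lemma mem_porbit_by_pact U p q u :
  u \in U -> (pact q u \in porbit_by U p) = (q \in porbit_by U p).
Proof. exact: (orbit_actr prof_action). Qed.

Definition orbit_rep (A : {set Gt h n}) q := odflt q [pick r in porbit_by A q].

Definition transporter (A : {set Gt h n}) q :=
  odflt 1 [pick u in A | pact (orbit_rep A q) u == q].

(* [base_spf U] maps r^u to u.2 for the chosen representative r of each U-orbit. *)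
Definition base_spf (A : {set Gt h n}) : SPF h n := [ffun q => (transporter A q).2].

Lemma orbit_rep_in U q : orbit_rep U q \in porbit_by U q.
Proof. by rewrite /orbit_rep; case: pickP => //= /(_ q); rewrite porbit_by_refl. Qed.

Lemma orbit_rep_pact U q u : u \in U -> orbit_rep U (pact q u) = orbit_rep U q.
Proof.
move=> Uu; rewrite /orbit_rep porbit_by_pact //.
by case: pickP => //= /(_ q); rewrite porbit_by_refl.
Qed.

Lemma transporterP U q :
  transporter U q \in U /\ pact (orbit_rep U q) (transporter U q) = q.
Proof.
rewrite /transporter; case: pickP => [u /andP[Uu /eqP] | none] //=.
have := orbit_rep_in U q; rewrite porbit_byE => /orbitP[v Uv /= qv].
have qv' : pact (orbit_rep U q) v^-1 = q by rewrite -qv -pactM mulgV pact1.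
by have := none v^-1; rewrite groupV Uv qv' eqxx.
Qed.

Lemma base_spf_FU U : regular U -> base_spf U \in FU U.
Proof.
move=> regU; rewrite mem_FU; apply/subsetP => u Uu; rewrite inE; apply/forallP => q.
have [Ut qt] := transporterP U q; have [Ut' qt'] := transporterP U (pact q u).
rewrite !ffunE; apply/eqP; rewrite orbit_rep_pact // in qt'.
have -> : (transporter U q).2 * u.2 = (transporter U q * u).2 by [].
apply: (regular_pact_inj (p := orbit_rep U q) regU); rewrite ?groupM //.
by rewrite pactM qt qt'.
Qed.

Lemma FU_mull (A : {set Gt h n}) (c : Prof h n -> {perm 'I_n}) F :
    (forall q u, u \in A -> c (pact q u) = c q) ->
  F \in FU A -> [ffun q => c q * F q] \in FU A.
Proof.
move=> cA; rewrite !mem_FU => /subsetP sAG; apply/subsetP => u Au.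
have := sAG u Au; rewrite !inE => /forallP FA; apply/forallP => q.
by rewrite !ffunE cA // (eqP (FA q)) mulgA.
Qed.

End Profiles.

Section SymmetryGroup.
Variables (h n : nat) (U : {group Gt h n}).
Hypothesis regU : regular U.

Local Notation W := (\bigcap_(F in FU U) GF F).

Lemma bigcap_GF_pact F p g : F \in FU U -> g \in W -> F (pact p g) = F p * g.2.
Proof. by move=> FF /bigcapP/(_ F FF); rewrite inE => /forallP/(_ p)/eqP. Qed.

Lemma bigcap_GF_invariant (c : Prof h n -> {perm 'I_n}) p g :
    (forall q u, u \in U -> c (pact q u) = c q) ->
  g \in W -> c (pact p g) = c p.
Proof.
move=> cU Wg; move: (base_spf U) (base_spf_FU regU) => F0 F0U.
have := bigcap_GF_pact p (FU_mull cU F0U) Wg.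
by rewrite !ffunE (bigcap_GF_pact p F0U Wg) mulgA => /mulIg/mulIg.
Qed.

Lemma bigcap_GF_regular : regular W.
Proof.
apply/regularP => p g Wg pg; have := bigcap_GF_pact p (base_spf_FU regU) Wg.
by rewrite pg -{1}[base_spf U p]mulg1 => /mulgI <-.
Qed.

Lemma bigcap_GF_orbit p : (2 <= n)%N -> porbit_by W p \subset porbit_by U p.
Proof.
move=> n_ge2; have [t t_neq1] := exists_perm_neq1 n_ge2.
apply/subsetP => _ /imsetP[g Wg ->].
pose c r := if r \in porbit_by U p then 1 else t.
have cU q u : u \in U -> c (pact q u) = c q by move=> Uu; rewrite /c mem_porbit_by_pact.
have := bigcap_GF_invariant p cU Wg; rewrite /c porbit_by_refl.
by case: ifP => // _ t1; rewrite t1 eqxx in t_neq1.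
Qed.

Lemma bigcap_GF_inA : (2 <= n)%N -> inA U W.
Proof.
move=> n_ge2; apply/and3P; split; first exact: bigcap_GF_regular.
  by apply/bigcapsP => F; rewrite mem_FU.
by apply/forallP => p; apply: bigcap_GF_orbit.
Qed.

Lemma Oext_bigcap_GF : (2 <= n)%N -> Oext U = W.
Proof.
move=> n_ge2; apply/eqP; rewrite eqEsubset; apply/andP; split.
  by apply/bigcapsP => F; apply: Oext_sub_GF.
by apply: sub_gen; apply: (bigcup_sup [group of W]); apply: bigcap_GF_inA.
Qed.

End SymmetryGroup.

Theorem mainTheorem15 (h n : nat) (hh : (2 <= h)%N) (hn : (2 <= n)%N)
  (U : {group Gt h n}) (hU : regular U) :
  [/\ regular (Oext U),
      FU U = FU (Oext U) &
      \bigcap_(F in FU U) GF F = Oext U].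
Proof.
have OW := Oext_bigcap_GF hU hn.
have [regW sUW _] := and3P (bigcap_GF_inA hU hn).
split=> //; first by rewrite OW.
apply/setP => F; rewrite !mem_FU OW; apply/idP/idP => [sUG | /(subset_trans sUW)//].
by apply: bigcap_inf; rewrite mem_FU.
Qed.
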